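(* Let $\mathcal{G}_{24}$ be the $(24,12,8)$ extended binary Golay code and $\mathcal{G}_{12}$ the $(12,6,6)$ extended ternary Golay code. Then $\rho(\mathcal{G}_{24}) \le 34$ and $\rho(\mathcal{G}_{12}) \le 22$.
   Context: A parity-check matrix for a linear code $\mathcal{C}$ is any matrix (possibly with linearly dependent rows) whose rows span $\mathcal{C}^\perp$. For a parity-check matrix $H$, the stopping distance $s(H)$ is the largest integer such that for every set of $s(H)-1$ or fewer columns of $H$, the projection of $H$ onto those columns contains at least one row of Hamming weight exactly one (exactly one nonzero entry). The stopping redundancy $\rho(\mathcal{C})$ is the smallest number of rows of a parity-check matrix $H$ for $\mathcal{C}$ with $s(H)$ equal to the minimum Hamming distance of $\mathcal{C}$. *)

(* Linear codes over a finite field F are given by a generator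
   matrix G : 'M[F]_(k, n); the code is the row space of G. *)
From mathcomp Require Import all_boot all_order all_algebra.
Set Implicit Arguments. Unset Strict Implicit. Unset Printing Implicit Defensive.
Import GRing.Theory.
Local Open Scope ring_scope.

Section Codes.
Variable F : fieldType.

Definition hwt n (v : 'rV[F]_n) : nat := #|[set j | v 0 j != 0]|.

Definition is_min_dist k n (G : 'M[F]_(k, n)) (d : nat) : Prop :=
  (exists c : 'rV[F]_n, [/\ (c <= G)%MS, c != 0 & hwt c = d]) /\
  (forall c : 'rV[F]_n, (c <= G)%MS -> c != 0 -> (d <= hwt c)%N).

(* H is a parity-check matrix for the code with generator matrix G: the rows
   of H span the dual code C^perp = { u | u *m G^T = 0 } = row space of kermx G^T. *)
Definition is_parity_check k n r (G : 'M[F]_(k, n)) (H : 'M[F]_(r, n)) : Prop :=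
  (H == kermx G^T)%MS.

Definition has_wt1_row r n (H : 'M[F]_(r, n)) (S : {set 'I_n}) : bool :=
  [exists i : 'I_r, #|[set j in S | H i j != 0]| == 1%N].

Definition stop_prop r n (H : 'M[F]_(r, n)) (s : nat) : Prop :=
  forall S : {set 'I_n}, S != set0 -> (#|S| < s)%N -> has_wt1_row H S.

(* s(H) = s : s is the largest integer with the property above
   (the property is downward closed in s). *)
Definition stopping_distance r n (H : 'M[F]_(r, n)) (s : nat) : Prop :=
  stop_prop H s /\ ~ stop_prop H s.+1.

Definition stopping_redundancy_le k n (G : 'M[F]_(k, n)) (m : nat) : Prop :=
  exists (d r : nat) (H : 'M[F]_(r, n)),
    [/\ (r <= m)%N, is_parity_check G H, is_min_dist G d & stopping_distance H d].

End Codes.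

Definition mx_of_table (F : fieldType) k n (t : seq (seq nat)) : 'M[F]_(k, n) :=
  \matrix_(i < k, j < n) ((nth 0%N (nth [::] t i) j)%:R : F).

(* Extended binary Golay code (24,12,8): generator [I_12 | B], with B built from
   the quadratic residues mod 11. *)
Definition golay24_table : seq (seq nat) :=
[:: [:: 1; 0; 0; 0; 0; 0; 0; 0; 0; 0; 0; 0; 0; 1; 1; 1; 1; 1; 1; 1; 1; 1; 1; 1];
[:: 0; 1; 0; 0; 0; 0; 0; 0; 0; 0; 0; 0; 1; 1; 1; 0; 1; 1; 1; 0; 0; 0; 1; 0];
[:: 0; 0; 1; 0; 0; 0; 0; 0; 0; 0; 0; 0; 1; 0; 1; 1; 0; 1; 1; 1; 0; 0; 0; 1];
[:: 0; 0; 0; 1; 0; 0; 0; 0; 0; 0; 0; 0; 1; 1; 0; 1; 1; 0; 1; 1; 1; 0; 0; 0];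
[:: 0; 0; 0; 0; 1; 0; 0; 0; 0; 0; 0; 0; 1; 0; 1; 0; 1; 1; 0; 1; 1; 1; 0; 0];
[:: 0; 0; 0; 0; 0; 1; 0; 0; 0; 0; 0; 0; 1; 0; 0; 1; 0; 1; 1; 0; 1; 1; 1; 0];
[:: 0; 0; 0; 0; 0; 0; 1; 0; 0; 0; 0; 0; 1; 0; 0; 0; 1; 0; 1; 1; 0; 1; 1; 1];
[:: 0; 0; 0; 0; 0; 0; 0; 1; 0; 0; 0; 0; 1; 1; 0; 0; 0; 1; 0; 1; 1; 0; 1; 1];
[:: 0; 0; 0; 0; 0; 0; 0; 0; 1; 0; 0; 0; 1; 1; 1; 0; 0; 0; 1; 0; 1; 1; 0; 1];
[:: 0; 0; 0; 0; 0; 0; 0; 0; 0; 1; 0; 0; 1; 1; 1; 1; 0; 0; 0; 1; 0; 1; 1; 0];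
[:: 0; 0; 0; 0; 0; 0; 0; 0; 0; 0; 1; 0; 1; 0; 1; 1; 1; 0; 0; 0; 1; 0; 1; 1];
[:: 0; 0; 0; 0; 0; 0; 0; 0; 0; 0; 0; 1; 1; 1; 0; 1; 1; 1; 0; 0; 0; 1; 0; 1]].

Definition golay24_gen : 'M['F_2]_(12, 24) := mx_of_table _ _ _ golay24_table.

Definition golay12_table : seq (seq nat) :=
[:: [:: 1; 0; 0; 0; 0; 0; 0; 1; 1; 1; 1; 1];
    [:: 0; 1; 0; 0; 0; 0; 1; 0; 1; 2; 2; 1];
    [:: 0; 0; 1; 0; 0; 0; 1; 1; 0; 1; 2; 2];
    [:: 0; 0; 0; 1; 0; 0; 1; 2; 1; 0; 1; 2];
    [:: 0; 0; 0; 0; 1; 0; 1; 2; 2; 1; 0; 1];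
    [:: 0; 0; 0; 0; 0; 1; 1; 1; 2; 2; 1; 0]].

Definition golay12_gen : 'M['F_3]_(6, 12) := mx_of_table _ _ _ golay12_table.

From mathcomp Require Import all_boot all_order all_algebra.
Set Implicit Arguments. Unset Strict Implicit. Unset Printing Implicit Defensive.
Import GRing.Theory.
Local Open Scope ring_scope.

(* The bounds are witnessed by explicit parity-check matrices H with 34 and 22 rows, given as
   tables of natural numbers read modulo p, and everything about them is checked by evaluation.
   H is a parity-check matrix because its rows are orthogonal to the generator G and n - k of
   them are independent; the minimum distance d is found by running through all p^k messages;
   and s(H) >= d is checked by running through all sets of fewer than d columns. The converse
   s(H) <= d needs no computation: the support of a codeword of weight d meets no row of H in
   exactly one position, since that row would have nonzero inner product with the codeword. *)

Section StoppingRedundancy.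
Variable F : fieldType.

Lemma codeword_support_no_wt1_row k n r (G : 'M[F]_(k, n)) (H : 'M[F]_(r, n))
    (c : 'rV[F]_n) :
  H *m G^T = 0 -> (c <= G)%MS -> ~~ has_wt1_row H [set j | c 0 j != 0].
Proof.
move=> HG /submxP [u ->]; apply/existsP => -[i /cards1P [j0 supp]].
have in_supp j : (j \in [set j in [set j | (u *m G) 0 j != 0] | H i j != 0]) = (j == j0).
  by rewrite supp inE.
have := in_supp j0; rewrite eqxx !inE => /andP [cj0 Hij0].
have : (H *m (u *m G)^T) i 0 = 0 by rewrite trmx_mul mulmxA HG mul0mx mxE.
rewrite mxE (bigD1 j0) //= big1 => [|j ne_j]; last first.
  rewrite mxE; have := in_supp j; rewrite (negbTE ne_j) !inE.
  by case: eqP => [->|_]; rewrite ?mulr0 //= => /negbFE /eqP ->; rewrite mul0r.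
by rewrite addr0 mxE => /eqP; rewrite mulf_eq0 (negbTE cj0) (negbTE Hij0).
Qed.

Lemma min_dist_not_stop_prop k n r (G : 'M[F]_(k, n)) (H : 'M[F]_(r, n)) d :
  is_parity_check G H -> is_min_dist G d -> ~ stop_prop H d.+1.
Proof.
move=> /eqmxP eqHK [[c [cG nz_c wt_c]] _] stopH.
have HG : H *m G^T = 0 by apply/eqP; rewrite -sub_kermx eqHK.
have supp_ne : [set j | c 0 j != 0] != set0.
  apply: contra_neq nz_c => supp0; apply/rowP => j.
  by rewrite mxE; apply/eqP; move: (in_set0 j); rewrite -supp0 inE => /negbFE.
apply: (negP (codeword_support_no_wt1_row HG cG)); apply: stopH supp_ne _.
by rewrite -[#|_|]/(hwt c) wt_c.
Qed.

Lemma parity_check_of_rank k n r (G : 'M[F]_(k, n)) (H : 'M[F]_(r, n)) :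
  H *m G^T = 0 -> (n <= \rank G + \rank H)%N -> is_parity_check G H.
Proof.
move=> HG rkGH; have sHK : (H <= kermx G^T)%MS by rewrite sub_kermx HG.
rewrite /is_parity_check -(mxrank_leqif_eq sHK) eqn_leq (mxrank_leqif_eq sHK) /=.
by rewrite mxrank_ker mxrank_tr leq_subLR.
Qed.

Lemma stopping_redundancy_le_of_stop_prop k n r m (G : 'M[F]_(k, n)) (H : 'M[F]_(r, n)) d :
  (r <= m)%N -> is_parity_check G H -> is_min_dist G d -> stop_prop H d ->
  stopping_redundancy_le G m.
Proof.
move=> le_rm HG dG stopH; exists d, r, H; split=> //; split=> //.
exact: min_dist_not_stop_prop HG dG.
Qed.

End StoppingRedundancy.

Lemma card_count (T : finType) (A : {pred T}) : #|A| = count [in A] (enum T).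
Proof. by rewrite enumT cardE /enum_mem size_filter. Qed.

Lemma card_ord_count n (P : pred nat) : #|[pred j : 'I_n | P j]| = count P (iota 0 n).
Proof. by rewrite card_count -val_enum_ord count_map. Qed.

Lemma sum_ord_sumn n (f : nat -> nat) : (\sum_(j < n) f j)%N = sumn [seq f j | j <- iota 0 n].
Proof. by rewrite sumnE big_map -(big_mkord xpredT) /index_iota subn0. Qed.

Lemma all_iota_ord n (P : pred nat) : all P (iota 0 n) -> forall i : 'I_n, P i.
Proof. by move=> /allP allP i; apply: allP; rewrite mem_iota ltn_ord. Qed.

Definition table_entry (t : seq (seq nat)) i j := nth 0%N (nth [::] t i) j.

Lemma mx_of_table_nil (F : fieldType) k n : mx_of_table F k n [::] = 0.
Proof. by apply/matrixP => i j; rewrite !mxE !nth_nil. Qed.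

Definition id_table m := mkseq (fun i => mkseq (fun j => nat_of_bool (i == j)) m) m.

Lemma mx_of_id_table (F : fieldType) m : mx_of_table F m m (id_table m) = 1%:M.
Proof. by apply/matrixP => i j; rewrite !mxE !nth_mkseq. Qed.

Lemma mx_of_table_submx (F : fieldType) m r n t :
  (m <= r)%N -> (mx_of_table F m n t <= mx_of_table F r n t)%MS.
Proof.
move=> le_mr; apply/row_subP => i.
have -> : row i (mx_of_table F m n t) = row (widen_ord le_mr i) (mx_of_table F r n t).
  by apply/rowP => j; rewrite !mxE.
exact: row_sub.
Qed.

Definition dotn n (a b : seq nat) := sumn [seq nth 0 a j * nth 0 b j | j <- iota 0 n]%N.

Lemma dotnE n a b : dotn n a b = (\sum_(j < n) nth 0 a j * nth 0 b j)%N.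
Proof. by rewrite (sum_ord_sumn n (fun j => nth 0 a j * nth 0 b j)%N). Qed.

Definition codeword_entry k t w j := sumn [seq nth 0 w i * table_entry t i j | i <- iota 0 k]%N.

Lemma codeword_entryE k t w j :
  codeword_entry k t w j = (\sum_(i < k) nth 0 w i * table_entry t i j)%N.
Proof. by rewrite (sum_ord_sumn k (fun i => nth 0 w i * table_entry t i j)%N). Qed.

Fixpoint add_column (cnt : seq nat) (c : seq bool) : seq nat :=
  if cnt is x :: cnt' then (x + head false c)%N :: add_column cnt' (behead c) else [::].

Lemma size_add_column cnt c : size (add_column cnt c) = size cnt.
Proof. by elim: cnt c => //= x cnt IH c; rewrite IH. Qed.

Lemma nth_add_column cnt c i :
  (i < size cnt)%N -> nth 0%N (add_column cnt c) i = (nth 0%N cnt i + nth false c i)%N.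
Proof. by elim: cnt c i => //= x cnt IH [|b c] [|i] //= lt_i; rewrite IH ?nth_nil. Qed.

(* [cnt] counts, row by row, the nonzero entries of the columns already chosen. *)
Fixpoint wt1_check (cols : seq (seq bool)) (cnt : seq nat) (b : nat) (nonempty : bool) : bool :=
  if cols is c :: cols' then
    wt1_check cols' cnt b nonempty &&
    (if b is b'.+1 then wt1_check cols' (add_column cnt c) b' true else true)
  else ~~ nonempty || has (pred1 1%N) cnt.

Lemma wt1_checkP cols cnt b nonempty : wt1_check cols cnt b nonempty ->
  forall m, (size (mask m cols) <= b)%N -> nonempty || (mask m cols != [::]) ->
  exists2 i, (i < size cnt)%N & (nth 0 cnt i + count (nth false ^~ i) (mask m cols) = 1)%N.
Proof.
elim: cols cnt b nonempty => [|c cols IH] cnt b nonempty /=.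
  move=> chk m; rewrite mask0 orbF => _ ne; move: chk; rewrite ne /=.
  by case/(has_nthP 0%N) => i lt_i /eqP cnt_i; exists i; rewrite ?addn0.
case/andP=> chk_skip chk_take [|[] m] /=; [exact: IH chk_skip [::] | | exact: IH chk_skip m].
case: b chk_skip chk_take => // b _ chk_take; rewrite ltnS => le_b _.
have [i] := IH _ _ _ chk_take m le_b isT; rewrite size_add_column => lt_i.
by rewrite nth_add_column // -addnA; exists i.
Qed.

Section PrimeField.
Variable p : nat.
Hypothesis p_pr : prime p.
Local Notation mxt := (mx_of_table 'F_p).

Lemma Fp_natr_eq a b : (a%:R == b%:R :> 'F_p) = (a == b %[mod p]).
Proof.
apply/eqP/eqP => [eq_ab | eq_mod]; first by rewrite -!(val_Fp_nat p_pr) eq_ab.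
by rewrite -(Fp_nat_mod p_pr) eq_mod Fp_nat_mod.
Qed.

Lemma Fp_natr_eq0 a : (a%:R == 0 :> 'F_p) = (p %| a)%N.
Proof. by rewrite -[0 : 'F_p]/(0%:R) Fp_natr_eq mod0n. Qed.

Lemma Fp_val_lt (x : 'F_p) : (val x < p)%N.
Proof. by case: x => /= x; rewrite (Fp_cast p_pr). Qed.

Lemma Fp_natr_val (x : 'F_p) : x = (val x)%:R.
Proof. by apply: val_inj; rewrite /= (val_Fp_nat p_pr) modn_small ?Fp_val_lt. Qed.

Definition weight_modp n (f : nat -> nat) := count (fun j => ~~ (p %| f j))%N (iota 0 n).

Lemma hwt_natr n (v : 'rV['F_p]_n) (f : nat -> nat) :
  (forall j : 'I_n, v 0 j = (f j)%:R) -> hwt v = weight_modp n f.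
Proof.
by move=> vf; rewrite /hwt /weight_modp -card_ord_count; apply: eq_card => j; rewrite !inE vf Fp_natr_eq0.
Qed.

Definition mulmxT_table_check m n l A B C := all (fun i => all (fun k =>
  dotn n (nth [::] A i) (nth [::] B k) == table_entry C i k %[mod p]) (iota 0 l)) (iota 0 m).

Lemma mulmxT_table m n l A B C :
  mulmxT_table_check m n l A B C -> mxt m n A *m (mxt l n B)^T = mxt m l C.
Proof.
move=> chk; apply/matrixP => i k; rewrite !mxE.
under eq_bigr => j _ do rewrite !mxE -natrM.
by apply/eqP; rewrite -natr_sum Fp_natr_eq -dotnE; apply: all_iota_ord (all_iota_ord chk i) k.
Qed.

Lemma rank_table m r n t P :
  (m <= r)%N -> mulmxT_table_check m n m t P (id_table m) -> (m <= \rank (mxt r n t))%N.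
Proof.
move=> le_mr /mulmxT_table tP; apply: leq_trans (mxrankS (mx_of_table_submx _ n t le_mr)).
by rewrite row_leq_rank; apply/row_freeP; exists (mxt m n P)^T; rewrite tP mx_of_id_table.
Qed.

Fixpoint all_words k (P : pred (seq nat)) : bool :=
  if k is k'.+1 then all (fun x => all_words k' (fun w => P (x :: w))) (iota 0 p) else P [::].

Lemma all_wordsP k P :
  all_words k P -> forall w, size w = k -> all (fun x => x < p)%N w -> P w.
Proof.
elim: k P => [|k IHk] P /=; first by move=> ? [].
move=> /allP allP [//|x w] [size_w] /andP [lt_xp lt_wp].
by apply: (IHk _ (allP x _) w); rewrite ?mem_iota.
Qed.

Definition min_weight_check k n t d := all_words k (fun w =>
  all (pred1 0%N) w || (d <= weight_modp n (codeword_entry k t w))%N).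

Definition word_of k (u : 'rV['F_p]_k) := [seq val (u 0 i) | i <- enum 'I_k].

Lemma word_ofE k (u : 'rV['F_p]_k) i : u 0 i = (nth 0 (word_of u) i)%:R.
Proof. by rewrite (nth_map i) ?size_enum_ord // nth_ord_enum -Fp_natr_val. Qed.

Lemma codeword_table k n t (u : 'rV['F_p]_k) (j : 'I_n) :
  (u *m mxt k n t) 0 j = (codeword_entry k t (word_of u) j)%:R.
Proof.
rewrite mxE codeword_entryE natr_sum; apply: eq_bigr => i _.
by rewrite natrM mxE -word_ofE.
Qed.

Lemma is_min_dist_table k n t d (i0 : 'I_k) :
  (0 < d)%N -> weight_modp n (table_entry t i0) = d -> min_weight_check k n t d ->
  is_min_dist (mxt k n t) d.
Proof.
move=> d_gt0 wt_i0 chk; split.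
  have wt_row : hwt (row i0 (mxt k n t)) = d.
    by rewrite -wt_i0; apply: hwt_natr => j; rewrite !mxE.
  exists (row i0 (mxt k n t)); split=> //; first exact: row_sub.
  apply: contraTneq d_gt0 => row0; rewrite -wt_row row0 (@hwt_natr _ _ (fun=> 0%N)) => [|j].
    by rewrite /weight_modp dvdn0 count_pred0.
  by rewrite mxE.
move=> _ /submxP [u ->] nz_c.
have [||/allP u0|] := orP (all_wordsP chk (w := word_of u) _ _).
- by rewrite size_map size_enum_ord.
- by apply/allP => _ /mapP [i _ ->]; apply: Fp_val_lt.
- case/eqP: nz_c; apply/matrixP => a j; rewrite mxE big1 ?mxE // => i _.
  by rewrite (ord1 a) word_ofE (eqP (u0 _ (mem_nth _ _))) ?mul0r // size_map size_enum_ord.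
- by rewrite (hwt_natr (codeword_table t u)).
Qed.

Definition column_support t j := [seq ~~ (p %| nth 0 row j)%N | row <- t].

Lemma nth_column_support t i j : nth false (column_support t j) i = ~~ (p %| table_entry t i j)%N.
Proof.
rewrite /table_entry; have [lt_i | le_i] := ltnP i (size t); first by rewrite (nth_map [::]).
by rewrite !nth_default ?size_map ?dvdn0.
Qed.

Definition stop_table_check n r t b :=
  wt1_check [seq column_support t j | j <- iota 0 n] (nseq r 0%N) b false.

Lemma stop_prop_table n r t b : stop_table_check n r t b -> stop_prop (mxt r n t) b.+1.
Proof.
move=> chk S S_ne S_lt.
set X := mask [seq j \in S | j <- enum 'I_n] [seq column_support t j | j <- iota 0 n].
have XE : X = [seq column_support t (val j) | j <- enum 'I_n & j \in S].
  by rewrite /X -val_enum_ord -map_comp -map_mask -filter_mask.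
have size_X : size X = #|S| by rewrite XE size_map size_filter -card_count.
have le_X : (size X <= b)%N by rewrite size_X -ltnS.
have ne_X : false || (X != [::]) by rewrite -size_eq0 size_X cards_eq0.
have [i] := wt1_checkP chk le_X ne_X.
rewrite size_nseq nth_nseq => lt_i; rewrite lt_i add0n -/X XE count_map => wt1.
apply/existsP; exists (Ordinal lt_i); apply/eqP; rewrite -wt1 count_filter card_count.
by apply: eq_count => j; rewrite !inE mxE nth_column_support Fp_natr_eq0 andbC.
Qed.

Lemma stopping_redundancy_le_table k n r m d Gt Ht Gi Hi (i0 : 'I_k) :
  (r <= m)%N -> (n - k <= r)%N ->
  mulmxT_table_check r n k Ht Gt [::] ->
  mulmxT_table_check k n k Gt Gi (id_table k) ->
  mulmxT_table_check (n - k) n (n - k) Ht Hi (id_table (n - k)) ->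
  weight_modp n (table_entry Gt i0) = d.+1 -> min_weight_check k n Gt d.+1 ->
  stop_table_check n r Ht d ->
  stopping_redundancy_le (mxt k n Gt) m.
Proof.
move=> le_rm le_nkr HG rkG rkH wt_i0 min_wt stopH.
apply: (stopping_redundancy_le_of_stop_prop le_rm _
  (is_min_dist_table (ltn0Sn d) wt_i0 min_wt) (stop_prop_table stopH)).
apply: parity_check_of_rank; first by rewrite (mulmxT_table HG) mx_of_table_nil.
apply: leq_trans (leq_add (rank_table (leqnn k) rkG) (rank_table le_nkr rkH)).
by rewrite -leq_subLR.
Qed.

End PrimeField.

Definition golay24_parity_table : seq (seq nat) :=
[::
[:: 0; 0; 0; 1; 0; 0; 0; 0; 0; 1; 1; 0; 1; 0; 0; 1; 0; 0; 1; 0; 0; 1; 0; 1];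
[:: 0; 0; 1; 0; 0; 0; 1; 0; 0; 0; 1; 1; 0; 1; 0; 1; 1; 0; 0; 0; 1; 0; 0; 0];
[:: 1; 1; 0; 1; 1; 0; 0; 0; 1; 0; 0; 0; 0; 0; 0; 0; 0; 1; 0; 1; 0; 1; 0; 0];
[:: 1; 0; 0; 1; 1; 0; 0; 0; 0; 1; 1; 0; 0; 1; 0; 0; 0; 0; 0; 0; 0; 1; 1; 0];
[:: 0; 1; 0; 0; 0; 0; 0; 1; 1; 0; 0; 1; 0; 0; 0; 1; 0; 1; 0; 1; 0; 0; 0; 1];
[:: 0; 0; 1; 0; 0; 1; 1; 0; 0; 0; 0; 0; 1; 0; 1; 0; 1; 0; 1; 0; 1; 0; 0; 0];
[:: 1; 1; 0; 0; 0; 1; 1; 1; 0; 1; 1; 0; 0; 0; 0; 0; 0; 0; 0; 0; 0; 0; 1; 0];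
[:: 0; 0; 1; 1; 0; 0; 0; 0; 1; 0; 0; 1; 0; 1; 0; 1; 0; 0; 1; 0; 0; 0; 0; 1];
[:: 0; 0; 0; 1; 1; 1; 0; 1; 0; 1; 0; 1; 0; 0; 0; 0; 1; 0; 0; 0; 0; 0; 1; 0];
[:: 0; 1; 0; 0; 0; 0; 0; 0; 0; 0; 1; 0; 0; 1; 0; 1; 0; 1; 1; 0; 1; 0; 0; 1];
[:: 0; 0; 0; 0; 0; 1; 0; 1; 1; 1; 0; 0; 0; 1; 0; 0; 0; 0; 0; 0; 1; 1; 1; 0];
[:: 0; 1; 1; 0; 1; 0; 0; 0; 0; 0; 1; 1; 1; 0; 0; 1; 0; 0; 0; 0; 0; 0; 0; 1];
[:: 0; 0; 0; 0; 1; 0; 0; 0; 0; 0; 0; 0; 1; 0; 1; 0; 1; 1; 0; 1; 1; 1; 0; 0];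
[:: 0; 1; 1; 1; 1; 0; 1; 0; 0; 0; 0; 0; 1; 0; 1; 0; 0; 1; 0; 0; 0; 0; 0; 0];
[:: 1; 0; 0; 1; 0; 0; 1; 0; 0; 0; 0; 0; 0; 0; 1; 0; 1; 1; 1; 1; 0; 0; 0; 0];
[:: 0; 0; 1; 0; 0; 1; 0; 1; 0; 1; 0; 0; 0; 0; 0; 1; 0; 1; 0; 1; 0; 0; 1; 0];
[:: 1; 0; 0; 1; 0; 0; 0; 0; 0; 0; 1; 1; 1; 1; 0; 0; 0; 0; 0; 0; 1; 0; 0; 1];
[:: 0; 1; 0; 0; 1; 0; 1; 0; 0; 0; 1; 0; 0; 1; 1; 1; 0; 0; 0; 0; 0; 0; 1; 0];
[:: 0; 0; 0; 0; 0; 0; 0; 1; 1; 1; 0; 1; 0; 0; 0; 0; 1; 0; 1; 0; 0; 1; 0; 1];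
[:: 1; 0; 0; 0; 0; 1; 0; 0; 0; 0; 0; 1; 0; 0; 1; 1; 0; 1; 0; 1; 0; 1; 0; 0];
[:: 0; 0; 1; 1; 1; 0; 0; 0; 0; 1; 1; 0; 1; 0; 0; 0; 1; 0; 0; 0; 1; 0; 0; 0];
[:: 1; 1; 1; 0; 0; 0; 0; 1; 1; 0; 0; 0; 0; 0; 0; 0; 0; 0; 0; 1; 1; 0; 1; 0];
[:: 0; 0; 0; 1; 0; 1; 1; 0; 0; 0; 0; 0; 1; 1; 0; 0; 0; 1; 1; 0; 0; 0; 0; 1];
[:: 1; 0; 0; 0; 1; 0; 0; 0; 0; 1; 0; 0; 0; 0; 1; 0; 0; 0; 1; 1; 0; 1; 0; 1];
[:: 0; 0; 0; 1; 0; 0; 1; 1; 0; 0; 0; 0; 1; 0; 0; 1; 0; 1; 0; 1; 0; 1; 0; 0];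
[:: 0; 1; 0; 0; 0; 1; 0; 0; 1; 0; 1; 0; 0; 0; 1; 0; 0; 0; 1; 0; 1; 0; 1; 0];
[:: 0; 0; 0; 0; 1; 0; 0; 0; 0; 0; 1; 1; 1; 1; 0; 0; 1; 0; 0; 1; 0; 0; 1; 0];
[:: 1; 0; 0; 0; 1; 1; 1; 1; 0; 0; 0; 0; 0; 0; 0; 0; 1; 0; 1; 0; 0; 0; 0; 1];
[:: 1; 0; 1; 0; 0; 1; 1; 0; 0; 0; 0; 1; 0; 0; 0; 0; 1; 0; 0; 1; 0; 0; 1; 0];
[:: 0; 1; 0; 0; 0; 1; 0; 0; 0; 0; 0; 0; 0; 1; 1; 1; 1; 0; 0; 0; 1; 1; 0; 0];
[:: 0; 0; 0; 0; 0; 1; 1; 1; 1; 0; 1; 0; 1; 0; 0; 0; 0; 0; 1; 0; 0; 1; 0; 0];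
[:: 1; 0; 0; 0; 0; 0; 0; 0; 1; 1; 0; 1; 1; 0; 1; 1; 0; 0; 0; 0; 0; 0; 0; 1];
[:: 0; 1; 0; 1; 0; 0; 1; 0; 0; 0; 0; 1; 0; 1; 1; 0; 0; 0; 1; 0; 1; 0; 0; 0];
[:: 1; 0; 0; 0; 0; 0; 1; 1; 0; 0; 0; 0; 0; 0; 1; 1; 0; 0; 0; 1; 0; 0; 1; 1]].

Definition golay24_parity_inv_table : seq (seq nat) :=
[::
[:: 1; 1; 0; 0; 0; 1; 1; 1; 0; 0; 1; 0; 0; 0; 0; 0; 0; 0; 0; 0; 0; 0; 0; 0];
[:: 0; 0; 0; 1; 0; 1; 1; 1; 1; 1; 0; 0; 0; 0; 0; 0; 0; 0; 0; 0; 0; 0; 0; 0];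
[:: 0; 1; 0; 1; 0; 1; 1; 0; 1; 0; 1; 0; 0; 0; 0; 0; 0; 0; 0; 0; 0; 0; 0; 0];
[:: 0; 0; 1; 0; 1; 0; 1; 1; 1; 0; 0; 0; 0; 0; 0; 0; 0; 0; 0; 0; 0; 0; 0; 0];
[:: 1; 1; 1; 0; 1; 1; 0; 1; 1; 1; 1; 0; 0; 0; 0; 0; 0; 0; 0; 0; 0; 0; 0; 0];
[:: 1; 1; 1; 0; 1; 0; 0; 0; 1; 1; 1; 0; 0; 0; 0; 0; 0; 0; 0; 0; 0; 0; 0; 0];
[:: 1; 1; 1; 1; 1; 1; 0; 1; 0; 0; 1; 0; 0; 0; 0; 0; 0; 0; 0; 0; 0; 0; 0; 0];
[:: 1; 0; 0; 0; 1; 1; 1; 1; 0; 0; 0; 1; 0; 0; 0; 0; 0; 0; 0; 0; 0; 0; 0; 0];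
[:: 0; 0; 1; 0; 0; 1; 0; 1; 0; 0; 0; 1; 0; 0; 0; 0; 0; 0; 0; 0; 0; 0; 0; 0];
[:: 0; 1; 0; 1; 0; 1; 1; 0; 0; 1; 0; 1; 0; 0; 0; 0; 0; 0; 0; 0; 0; 0; 0; 0];
[:: 0; 0; 1; 1; 0; 1; 0; 0; 1; 1; 0; 1; 0; 0; 0; 0; 0; 0; 0; 0; 0; 0; 0; 0];
[:: 0; 1; 0; 1; 0; 0; 0; 0; 0; 0; 1; 1; 0; 0; 0; 0; 0; 0; 0; 0; 0; 0; 0; 0]].

Definition golay12_parity_table : seq (seq nat) :=
[::
[:: 1; 1; 0; 2; 0; 1; 1; 0; 0; 2; 0; 0];
[:: 0; 0; 1; 0; 2; 0; 0; 2; 1; 0; 2; 1];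
[:: 0; 1; 1; 2; 2; 0; 0; 0; 1; 2; 0; 0];
[:: 0; 1; 2; 1; 0; 2; 0; 0; 0; 2; 0; 1];
[:: 1; 0; 0; 0; 2; 0; 2; 2; 2; 0; 1; 0];
[:: 0; 1; 2; 2; 0; 0; 2; 0; 0; 1; 2; 0];
[:: 1; 0; 0; 0; 0; 1; 1; 2; 0; 0; 2; 1];
[:: 0; 0; 0; 1; 1; 1; 0; 2; 2; 0; 2; 0];
[:: 1; 1; 0; 0; 2; 0; 0; 2; 0; 2; 0; 1];
[:: 1; 0; 0; 0; 0; 2; 2; 0; 2; 2; 0; 1];
[:: 1; 1; 2; 0; 0; 2; 2; 2; 0; 0; 0; 0];
[:: 1; 1; 2; 2; 1; 0; 0; 0; 0; 0; 0; 2];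
[:: 0; 1; 0; 0; 2; 0; 0; 1; 2; 1; 2; 0];
[:: 0; 0; 0; 0; 1; 1; 2; 0; 1; 0; 1; 1];
[:: 0; 1; 1; 2; 0; 0; 1; 2; 0; 0; 0; 1];
[:: 1; 0; 2; 2; 0; 2; 0; 0; 1; 1; 0; 0];
[:: 1; 0; 0; 0; 2; 2; 1; 1; 0; 1; 0; 0];
[:: 1; 0; 1; 2; 0; 0; 0; 0; 0; 2; 2; 1];
[:: 1; 2; 0; 0; 0; 2; 1; 0; 1; 0; 1; 0];
[:: 1; 0; 2; 1; 0; 0; 0; 2; 2; 0; 0; 1];
[:: 1; 0; 0; 2; 0; 0; 2; 2; 0; 1; 0; 2];
[:: 1; 0; 1; 0; 0; 1; 2; 0; 0; 1; 1; 0]].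

Definition golay12_parity_inv_table : seq (seq nat) :=
[::
[:: 0; 2; 0; 2; 0; 1; 0; 0; 0; 0; 0; 0];
[:: 1; 2; 2; 0; 1; 0; 0; 0; 0; 0; 0; 0];
[:: 1; 0; 1; 2; 1; 1; 0; 0; 0; 0; 0; 0];
[:: 0; 2; 0; 2; 0; 0; 0; 0; 0; 0; 0; 0];
[:: 1; 1; 0; 1; 0; 2; 0; 0; 0; 0; 0; 0];
[:: 2; 0; 2; 0; 2; 1; 0; 0; 0; 0; 0; 0]].

Lemma golay24_stopping_redundancy : stopping_redundancy_le golay24_gen 34.
Proof.
by apply: (@stopping_redundancy_le_table 2 isT 12 24 34 34 7 golay24_table golay24_parity_table
  (id_table 12) golay24_parity_inv_table (@Ordinal 12 1 isT)); vm_compute.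
Qed.

Lemma golay12_stopping_redundancy : stopping_redundancy_le golay12_gen 22.
Proof.
by apply: (@stopping_redundancy_le_table 3 isT 6 12 22 22 5 golay12_table golay12_parity_table
  (id_table 6) golay12_parity_inv_table (@Ordinal 6 0 isT)); vm_compute.
Qed.

Theorem mainTheorem14 :
  stopping_redundancy_le golay24_gen 34 /\ stopping_redundancy_le golay12_gen 22.
Proof. exact: (conj golay24_stopping_redundancy golay12_stopping_redundancy). Qed.
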